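(* Let $p\ge1$, $X=\{0,1,\dots,p\}$, and let $\Gamma^p_n$ be the $n$-th Schreier graph of the star automaton group $\mathcal G_{S_p}$. If $u,v$ are adjacent vertices of $\Gamma^p_n$, then for every $w\in X^\ast$ the vertices $uw$ and $vw$ are adjacent in $\Gamma^p_{n+|w|}$, with the only possible exception of the case where $\{u,v\}=\{0^n,i^n\}$ for some $i\in\{1,\dots,p\}$ and $w$ starts with $0$ or with $i$.
   Context: $\mathcal G_{S_p}$ is generated by $e_1,\dots,e_p$, transformations of $X^\ast$ defined recursively by $e_i(0w)=i\,e_i(w)$, $e_i(iw)=0w$, $e_i(jw)=jw$ for $j\notin\{0,i\}$, $e_i(\emptyset)=\emptyset$. The Schreier graph $\Gamma^p_n$ has vertex set $X^n$ and, for each $v\in X^n$ and each $i$, an edge labelled $e_i$ joining $v$ and $e_i(v)$ (a loop if $e_i(v)=v$). $|w|$ is the length of $w$. *)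

From mathcomp Require Import all_boot.
Set Implicit Arguments. Unset Strict Implicit. Unset Printing Implicit Defensive.

(* Alphabet X = {0,1,...,p} is 'I_p.+1; words X^* are seq 'I_p.+1. *)

Fixpoint star_gen (p : nat) (i : 'I_p.+1) (w : seq 'I_p.+1) : seq 'I_p.+1 :=
  match w with
  | [::] => [::]
  | x :: w' =>
      if x == ord0 then i :: star_gen i w'
      else if x == i then ord0 :: w'
      else x :: w'
  end.

Definition schreier_adj (p n : nat) (u v : seq 'I_p.+1) : Prop :=
  size u = n /\ size v = n /\
  exists i : 'I_p.+1, i != ord0 /\ (star_gen i u = v \/ star_gen i v = u).
Arguments schreier_adj : clear implicits.

From mathcomp Require Import all_boot.

(* e_i only rewrites a prefix 0^k followed by a letter, so on u ++ w it acts on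
   w exactly when u consists of zeros; and on a word starting with neither 0
   nor i it is the identity.  In the remaining case u = 0^n, hence v = i^n. *)

Section StarGenerator.

Variables (p : nat) (i : 'I_p.+1).

Lemma star_gen_cat (u w : seq 'I_p.+1) :
  star_gen i (u ++ w) =
  if all (pred1 ord0) u then star_gen i u ++ star_gen i w
  else star_gen i u ++ w.
Proof.
elim: u => [|x u IHu] //=.
by case: eqP => _ /=; [rewrite IHu; case: all | case: ifP].
Qed.

Lemma star_gen_nseq0 (n : nat) : star_gen i (nseq n ord0) = nseq n i.
Proof. by elim: n => [|n IHn] //=; rewrite IHn. Qed.

Lemma star_gen_id (w : seq 'I_p.+1) :
  ~ (exists x w', w = x :: w' /\ (x = ord0 \/ x = i)) -> star_gen i w = w.
Proof.
case: w => [|x w] //= hw.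
case: eqP => [x0|_]; first by case: hw; exists x, w; auto.
by case: eqP => [xi|_]; first by case: hw; exists x, w; auto.
Qed.

Lemma star_gen_cat_edge (u v w : seq 'I_p.+1) :
  star_gen i u = v ->
  ~ (u = nseq (size u) ord0 /\ v = nseq (size u) i /\
     exists x w', w = x :: w' /\ (x = ord0 \/ x = i)) ->
  star_gen i (u ++ w) = v ++ w.
Proof.
move=> <- hexc; rewrite star_gen_cat; case: ifP => // /all_pred1P u0.
rewrite (@star_gen_id w) // => hw; apply: hexc.
by do 2 split => //; rewrite {1}u0 star_gen_nseq0.
Qed.

End StarGenerator.

Theorem lemma4p3 (p : nat) (hp : 1 <= p) (n : nat) (u v : seq 'I_p.+1) :
  schreier_adj p n u v ->
  forall w : seq 'I_p.+1,
    ~ (exists i : 'I_p.+1,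
          i != ord0 /\
          ((u = nseq n ord0 /\ v = nseq n i) \/ (u = nseq n i /\ v = nseq n ord0)) /\
          (exists (x : 'I_p.+1) (w' : seq 'I_p.+1),
              w = x :: w' /\ (x = ord0 \/ x = i))) ->
    schreier_adj p (n + size w) (u ++ w) (v ++ w).
Proof.
move=> [su [sv [i [i0 edge]]]] w hw.
rewrite /schreier_adj !size_cat su sv; do 2 split => //; exists i; split => //.
case: edge => edge; [left | right]; apply: star_gen_cat_edge edge _.
- by rewrite su => -[u0 [vi hs]]; apply: hw; exists i; do 2 split => //; left.
- by rewrite sv => -[v0 [ui hs]]; apply: hw; exists i; do 2 split => //; right.
Qed.
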